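(* Let $N\ge1$, $\varphi,\gamma\in(0,1)$ with $\varphi+\gamma\ge1$. Consider one transition $\boldsymbol{x}\to Y$ on $\{0,1\}^N$ generated as follows: $Z$ is a random element of $\{0,1\}^N$ with exchangeable coordinates, $(U_k)_k$ are i.i.d. Uniform$(0,1)$ independent of $Z$, and independently for each $k$: if $Z[k]=1$, $Y[k]=1$ iff $\boldsymbol{x}[k]=0$ or ($\boldsymbol{x}[k]=1$ and $U_k\ge\bar\varphi/\gamma$); if $Z[k]=0$ and $\varphi\le\gamma$, $Y[k]=0$ iff $\boldsymbol{x}[k]=0$ or ($\boldsymbol{x}[k]=1$ and $U_k\ge\varphi/\gamma$); if $Z[k]=0$ and $\varphi>\gamma$, $Y[k]=1$ iff $\boldsymbol{x}[k]=1$ or ($\boldsymbol{x}[k]=0$ and $U_k\ge\bar\varphi/\bar\gamma$). Let $N_{0\cdot}=N-\|\boldsymbol{x}\|$, $N_{1\cdot}=\|\boldsymbol{x}\|$, $N_{01}=|\{k:\boldsymbol{x}[k]=0,Y[k]=1\}|$, $N_{11}=|\{k:\boldsymbol{x}[k]=1,Y[k]=1\}|$. Then the probability generating function $\mathbb{E}[s_{01}^{N_{01}}s_{11}^{N_{11}}\mid\|Z\|=\zeta]$, where $N=N_{0\cdot}+N_{1\cdot}$, is the coefficient of $\binom{N}{\zeta}\xi^\zeta$ in $$\begin{cases}(1+\xi s_{01})^{N_{0\cdot}}\big(1-\varphi/\gamma+s_{11}\varphi/\gamma+\xi(\bar\varphi/\gamma+s_{11}(1-\bar\varphi/\gamma))\big)^{N_{1\cdot}},&\varphi\le\gamma,\\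 \big(\bar\varphi/\bar\gamma+s_{01}(1-\bar\varphi/\bar\gamma)+\xi s_{01}\big)^{N_{0\cdot}}\big(s_{11}+\xi(\bar\varphi/\gamma+s_{11}(1-\bar\varphi/\gamma))\big)^{N_{1\cdot}},&\varphi>\gamma.\end{cases}$$
   Context: $\bar a=1-a$; $\|\boldsymbol{x}\|$ is the number of ones of $\boldsymbol{x}\in\{0,1\}^N$. This describes a transition of a time-homogeneous process with exchangeable coordinates from $X_{t-1}=\boldsymbol{x}$ to $X_t=Y$ with driving variable $Z=Z_t$. *)

From HB Require Import structures.
From mathcomp Require Import all_boot all_order all_algebra perm.
From mathcomp Require Import all_classical all_reals all_analysis.
Set Implicit Arguments. Unset Strict Implicit. Unset Printing Implicit Defensive.
Import Order.TTheory GRing.Theory Num.Theory.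
Local Open Scope classical_set_scope.
Local Open Scope ring_scope.

Definition ycoord (R : realType) (phi gamma : R) (z xk : bool) (u : R) : bool :=
  if z then
    (~~ xk) || (xk && ((1 - phi) / gamma <= u))
  else if phi <= gamma then
    ~~ ((~~ xk) || (xk && (phi / gamma <= u)))
  else
    xk || ((~~ xk) && ((1 - phi) / (1 - gamma) <= u)).

Definition nones (N : nat) (x : {ffun 'I_N -> bool}) : nat := #|[set k | x k]|.

Definition n01 (N : nat) (x y : {ffun 'I_N -> bool}) : nat :=
  #|[set k | ~~ x k && y k]|.
Definition n11 (N : nat) (x y : {ffun 'I_N -> bool}) : nat :=
  #|[set k | x k && y k]|.

Definition exchangeable (R : realType) (d : measure_display) (T : measurableType d)
  (P : probability T R) (N : nat) (Z : T -> {ffun 'I_N -> bool}) : Prop :=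
  forall (s : {perm 'I_N}) (z : {ffun 'I_N -> bool}),
    P [set w | Z w = z] = P [set w | Z w = [ffun k => z (s k)]].

Definition indep_Z_U (R : realType) (d : measure_display) (T : measurableType d)
  (P : probability T R) (N : nat) (Z : T -> {ffun 'I_N -> bool})
  (U : 'I_N -> T -> R) : Prop :=
  forall (z : {ffun 'I_N -> bool}) (B : 'I_N -> set R),
    (forall k, measurable (B k)) ->
    P [set w | Z w = z /\ forall k, B k (U k w)] =
    (P [set w | Z w = z] * \prod_(k < N) P (U k @^-1` B k))%E.

From HB Require Import structures.
From mathcomp Require Import all_boot all_order all_algebra.
From mathcomp Require Import all_classical all_reals all_analysis.
From mathcomp Require Import perm ring.
Import Order.TTheory GRing.Theory Num.Theory.
Local Open Scope classical_set_scope.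
Local Open Scope ring_scope.

(* Given Z = z, the coordinates of Y are independent and Y[k] is a function of z[k], x[k]
   and of the threshold event [c <= U_k], of probability 1 - c. Hence
   E[s01^N01 s11^N11; Z = z] = P(Z = z) * prod_k f(z[k], x[k]) for an explicit f.
   By exchangeability P(Z = z) is the same for all C(N, zeta) configurations z with zeta
   ones, and summing prod_k f(z[k], x[k]) over these z gives the coefficient of xi^zeta in
   prod_k (f(0, x[k]) + xi f(1, x[k])), which is the product of the statement once the
   factors are grouped according to x[k]. *)

(* [set k | p k] is a classical set here, as in the definition of [nones]. *)
Lemma card_mkset {I : finType} (p : pred I) : #|[set k | p k]| = #|p|.
Proof. by apply: eq_card => k; rewrite !unfold_in /= asboolb. Qed.

Lemma sum_nat_of_bool {I : finType} (p : pred I) : (\sum_(k : I) p k)%N = #|p|.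
Proof.
by rewrite -sum1_card [RHS]big_mkcond; apply: eq_bigr => k _; rewrite unfold_in; case: (p k).
Qed.

Lemma perm_eq_boolseq (s t : seq bool) :
  size s = size t -> count id s = count id t -> perm_eq s t.
Proof.
move=> size_st count_st.
have count_false u : (count_mem false u = size u - count id u)%N.
  by rewrite -(count_predC id u) addKn; apply: eq_count => -[].
apply/allP => -[] _ /=; apply/eqP; last by rewrite !count_false size_st count_st.
by rewrite !(@eq_count _ _ id) // => -[].
Qed.

Lemma count_nones {N} (z : {ffun 'I_N -> bool}) : count id [tuple z k | k < N] = nones z.
Proof. by rewrite /nones card_mkset cardE /= count_map -size_filter enumT. Qed.

Lemma eq_nones_perm {N} (z z' : {ffun 'I_N -> bool}) :
  nones z = nones z' -> exists s : 'S_N, z' = [ffun k => z (s k)].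
Proof.
move=> eq_nones.
have /tuple_permP[s /val_inj eq_tuple] :
    perm_eq [tuple z' k | k < N] [tuple z k | k < N].
  by apply: perm_eq_boolseq; rewrite ?size_tuple // !count_nones.
exists s; apply/ffunP => k.
by have := congr1 (fun t => tnth t k) eq_tuple; rewrite /= !tnth_mktuple ffunE.
Qed.

Lemma card_nones N m :
  #|[pred z : {ffun 'I_N -> bool} | nones z == m]| = 'C(N, m).
Proof.
rewrite -[in RHS](card_ord N) -card_draws.
pose support (z : {ffun 'I_N -> bool}) := [set k | z k]%SET.
have support_bij : bijective support.
  exists (fun A : {set 'I_N} => [ffun k => k \in A]) => [z | A].
    by apply/ffunP => k; rewrite ffunE inE.
  by apply/setP => k; rewrite inE ffunE.
have support_inj := bij_inj support_bij.
rewrite -(fintype.card_image support_inj); apply: eq_card => A.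
have [g _ gK] := support_bij; rewrite -[A]gK (fintype.mem_image support_inj) !inE.
by rewrite /nones (card_mkset (g A)) cardsE.
Qed.

Lemma coef_prod_affine {R : comNzRingType} {N} (c : 'I_N -> bool -> R) m :
  (\prod_(k < N) ((c k false)%:P + 'X * (c k true)%:P))`_m =
  \sum_(z : {ffun 'I_N -> bool} | nones z == m) \prod_k c k (z k).
Proof.
have -> : \prod_(k < N) ((c k false)%:P + 'X * (c k true)%:P) =
    \prod_(k < N) \sum_(j : bool) (c k j)%:P * 'X^j.
  by apply: eq_bigr => k _; rewrite big_bool /= expr1 expr0 mulr1 addrC mulrC.
rewrite bigA_distr_bigA coef_sum [RHS]big_mkcond; apply: eq_bigr => z _ /=.
rewrite big_split /= prodrXr -rmorph_prod coefCM coefXn sum_nat_of_bool.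
by rewrite /nones card_mkset eq_sym; case: (_ == m); rewrite ?mulr1 ?mulr0.
Qed.

Lemma prodr_if_nones {R : comPzSemiRingType} {N} (x : {ffun 'I_N -> bool}) (a b : R) :
  \prod_(k < N) (if x k then b else a) = a ^+ (N - nones x) * b ^+ nones x.
Proof.
rewrite (eq_bigr (fun k => a ^+ (~~ x k) * b ^+ (x k))); last first.
  by move=> k _; case: (x k); rewrite ?mulr1 ?mul1r.
rewrite big_split /= !prodrXr !sum_nat_of_bool /nones card_mkset.
have cardCx := cardC [pred k | x k]; rewrite card_ord in cardCx.
by rewrite -[N in (N - _)%N]cardCx addKn; congr (a ^+ _ * _); apply: eq_card.
Qed.

Lemma integral_finite_valued {d} {T : measurableType d} {R : realType}
    (mu : {finite_measure set T -> \bar R}) {I : finType} (V : T -> I) (g : I -> R)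
    {D : set T} :
  measurable D -> (forall i, measurable [set w | V w = i]) ->
  (\int[mu]_(w in D) (g (V w))%:E = \sum_i (g i)%:E * mu ([set w | V w = i] `&` D))%E.
Proof.
move=> mD mV.
have gV w : g (V w) = \sum_i g i * \1_[set w | V w = i] w.
  rewrite (bigD1 (V w)) //= indicE mem_set // mulr1 big1 ?addr0 // => i Vwi.
  by rewrite indicE memNset ?mulr0 //= => /esym/eqP; rewrite (negbTE Vwi).
have intI i : mu.-integrable D (fun w => (\1_[set w | V w = i] w)%:E).
  by apply: (integrableS measurableT) => //; exact: integrable_indic.
under eq_integral => w _ do rewrite gV -sumEFin.
under eq_integral do under eq_bigr do rewrite EFinM.
rewrite integral_sum //; last by move=> i; exact: integrableZl.
by apply: eq_bigr => i _; rewrite integralZl ?integral_indic.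
Qed.

Lemma uniform_prob_ge {R : realType} (c : R) : 0 <= c <= 1 ->
  uniform_prob (@ltr01 R) [set u | c <= u] = (1 - c)%:E.
Proof.
move=> /andP[c0 c1].
rewrite /uniform_prob integral_uniform_pdf.
have -> : [set u : R | c <= u] `&` `[0, 1]%classic = `[c, 1]%classic.
  apply/seteqP; split => u /=; rewrite !in_itv /=.
    by move=> [cu /andP[_ ->]]; rewrite cu.
  by move=> /andP[cu u1]; split => //; rewrite u1 (le_trans c0 cu).
rewrite (eq_integral (fun=> 1%:E)); last first.
  move=> u; rewrite inE /= in_itv /= => /andP[cu u1].
  by rewrite /uniform_pdf (le_trans c0 cu) u1 subr0 invr1.
rewrite integral_cst //= lebesgue_measure_itv /= lte_fin mul1e.
by case: ltgtP c1 => // -> _; rewrite subrr.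
Qed.

Lemma threshold_setE {R : realType} (c : R) (b : pred bool) :
  [set u | b (c <= u)] =
  if b true then (if b false then setT else [set u | c <= u])
  else (if b false then ~` [set u | c <= u] else set0).
Proof.
case bt: (b true); case bf: (b false);
  by apply/seteqP; split => u /=; case: (c <= u); rewrite ?bt ?bf.
Qed.

Lemma measurable_ge {R : realType} (c : R) : measurable [set u : R | c <= u].
Proof. by have := @measurable_itv R `[c, +oo[; rewrite set_itvE. Qed.

Lemma measurable_threshold {R : realType} (c : R) (b : pred bool) :
  measurable [set u : R | b (c <= u)].
Proof.
have := measurable_ge c.
by rewrite threshold_setE; case: (b true); case: (b false) => //; exact: measurableC.
Qed.

Lemma uniform_prob_threshold {R : realType} (c : R) (b : pred bool) : 0 <= c <= 1 ->
  uniform_prob (@ltr01 R) [set u | b (c <= u)] =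
  ((b true)%:R * (1 - c) + (b false)%:R * c)%:E.
Proof.
move=> c01; rewrite threshold_setE; case: (b true); case: (b false) => /=.
- by rewrite probability_setT !mul1r subrK.
- by rewrite uniform_prob_ge // mul1r mul0r addr0.
- rewrite probability_setC; last exact: measurable_ge.
  rewrite -[X in (1 - X)%E]/(uniform_prob (@ltr01 R) _) uniform_prob_ge //.
  by rewrite mul0r add0r mul1r -EFinB opprB addrC subrK.
- by rewrite !mul0r addr0; exact: measure0.
Qed.

Definition pgf_weight {R : pzSemiRingType} (s01 s11 : R) (xk yk : bool) : R :=
  s01 ^+ (~~ xk && yk) * s11 ^+ (xk && yk).

Lemma pgf_monomialE {R : comPzSemiRingType} (s01 s11 : R) {N} (x y : {ffun 'I_N -> bool}) :
  s01 ^+ n01 x y * s11 ^+ n11 x y = \prod_k pgf_weight s01 s11 (x k) (y k).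
Proof. by rewrite big_split /= !prodrXr !sum_nat_of_bool /n01 /n11 !card_mkset. Qed.

Section CoordinateRule.
Context {R : realType} (phi gamma : R).

Definition ythreshold (z : bool) : R :=
  if z then (1 - phi) / gamma
  else if phi <= gamma then phi / gamma else (1 - phi) / (1 - gamma).

Definition yrule (z xk t : bool) : bool :=
  if z then ~~ xk || t else if phi <= gamma then xk && ~~ t else xk || t.

Lemma ycoordE z xk u : ycoord phi gamma z xk u = yrule z xk (ythreshold z <= u).
Proof. by rewrite /ycoord /yrule /ythreshold; case: z; [|case: ifP]; case: xk. Qed.

Definition ytrans (z xk e : bool) : R :=
  (yrule z xk true == e)%:R * (1 - ythreshold z) +
  (yrule z xk false == e)%:R * ythreshold z.

Definition ycoord_event (z xk e : bool) : set R :=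
  [set u | yrule z xk (ythreshold z <= u) == e].

Lemma measurable_ycoord_event z xk e : measurable (ycoord_event z xk e).
Proof. exact: (measurable_threshold (ythreshold z) (fun t => yrule z xk t == e)). Qed.

Definition ycoord_pgf (s01 s11 : R) (z xk : bool) : R :=
  \sum_(e : bool) pgf_weight s01 s11 xk e * ytrans z xk e.

Lemma prod_ycoord_pgf (s01 s11 : R) N (x : {ffun 'I_N -> bool}) :
  \prod_(k < N) ((ycoord_pgf s01 s11 false (x k))%:P +
                 'X * (ycoord_pgf s01 s11 true (x k))%:P) =
  if phi <= gamma then
    (1 + 'X * s01%:P) ^+ (N - nones x) *
    ((1 - phi / gamma + s11 * (phi / gamma))%:P
     + 'X * ((1 - phi) / gamma + s11 * (1 - (1 - phi) / gamma))%:P) ^+ nones x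
  else
    (((1 - phi) / (1 - gamma) + s01 * (1 - (1 - phi) / (1 - gamma)))%:P
     + 'X * s01%:P) ^+ (N - nones x) *
    (s11%:P + 'X * ((1 - phi) / gamma + s11 * (1 - (1 - phi) / gamma))%:P) ^+ nones x.
Proof.
case: ifP => phi_le; rewrite -?polyC1 -prodr_if_nones; apply: eq_bigr => k _;
  rewrite /ycoord_pgf !big_bool /pgf_weight /ytrans /yrule /ythreshold phi_le;
  by case: (x k) => /=; congr (_%:P + 'X * _%:P); ring.
Qed.

Hypotheses (phi01 : 0 < phi < 1) (gamma01 : 0 < gamma < 1) (phi_gamma : 1 <= phi + gamma).

Lemma ythreshold01 z : 0 <= ythreshold z <= 1.
Proof.
move: phi01 gamma01 => /andP[phi0 phi1] /andP[gamma0 gamma1].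
have [phi_ge0 gamma_ge0] := (ltW phi0, ltW gamma0).
have [phi'_ge0 gamma'_gt0] : 0 <= 1 - phi /\ 0 < 1 - gamma.
  by rewrite subr_ge0 subr_gt0 ltW.
rewrite /ythreshold; case: z; last case: (leP phi gamma) => [phi_le | /ltW gamma_le].
- by rewrite divr_ge0 //= ler_pdivrMr // mul1r lerBlDr addrC.
- by rewrite divr_ge0 //= ler_pdivrMr // mul1r.
- by rewrite divr_ge0 ?(ltW gamma'_gt0) //= ler_pdivrMr // mul1r lerB.
Qed.

Lemma uniform_prob_ycoord_event z xk e :
  uniform_prob (@ltr01 R) (ycoord_event z xk e) = (ytrans z xk e)%:E.
Proof. exact: (uniform_prob_threshold _ (fun t => yrule z xk t == e) (ythreshold01 z)). Qed.

End CoordinateRule.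

Lemma nones_le {N} (z : {ffun 'I_N -> bool}) : (nones z <= N)%N.
Proof. by rewrite /nones card_mkset; apply: leq_trans (max_card _) _; rewrite card_ord. Qed.

Lemma exchangeable_eq_nones {R : realType} {d} {T : measurableType d}
    {P : probability T R} {N} {Z : T -> {ffun 'I_N -> bool}} (z z' : {ffun 'I_N -> bool}) :
  exchangeable P Z -> nones z = nones z' -> P [set w | Z w = z] = P [set w | Z w = z'].
Proof. by move=> exch /eq_nones_perm[s ->]; exact: exch. Qed.

Lemma measurable_finite_preimage {d} {T : measurableType d} {I : finType} (V : T -> I)
    (S : set I) :
  (forall i, measurable [set w | V w = i]) -> measurable (V @^-1` S).
Proof.
move=> mV; rewrite (_ : V @^-1` S = \bigcup_(i in S) [set w | V w = i]).
  by apply: fin_bigcup_measurable => //; exact: finite_finset.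
by apply/seteqP; split => [w Sw | w [i Si /= ->]] //; exists (V w).
Qed.

Section Transition.
Context {R : realType} {d : measure_display} {T : measurableType d} (P : probability T R)
  {N : nat} (phi gamma : R) (Z : T -> {ffun 'I_N -> bool}) (U : 'I_N -> T -> R)
  (x : {ffun 'I_N -> bool}).
Hypotheses (phi01 : 0 < phi < 1) (gamma01 : 0 < gamma < 1) (phi_gamma : 1 <= phi + gamma).
Hypotheses (mZ : forall z, measurable [set w | Z w = z])
  (mU : forall k, measurable_fun setT (U k))
  (unifU : forall k (B : set R), measurable B -> P (U k @^-1` B) = uniform_prob (@ltr01 R) B)
  (indepZU : indep_Z_U P Z U).

Local Notation Y w := [ffun k => ycoord phi gamma (Z w k) (x k) (U k w)].

Lemma Z_Y_eventE z e :
  [set w | (Z w, Y w) = (z, e)] =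
  [set w | Z w = z /\ forall k, ycoord_event phi gamma (z k) (x k) (e k) (U k w)].
Proof.
apply/seteqP; split => w /=.
  by case=> <- <-; split => // k; rewrite /ycoord_event /= ffunE ycoordE.
move=> [Zw Yw]; rewrite -Zw; congr pair; apply/ffunP => k.
by rewrite ffunE ycoordE Zw; apply/eqP/Yw.
Qed.

Lemma measurable_Z_Y_event z e : measurable [set w | (Z w, Y w) = (z, e)].
Proof.
rewrite Z_Y_eventE (_ : [set w | _ /\ _] = [set w | Z w = z] `&`
    \bigcap_(k in [set: 'I_N]) U k @^-1` ycoord_event phi gamma (z k) (x k) (e k)).
  apply: measurableI; first exact: mZ.
  apply: fin_bigcap_measurable; first exact: finite_finset.
  move=> k _; rewrite -[_ @^-1` _]setTI; apply: mU => //.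
  exact: measurable_ycoord_event.
by apply/seteqP; split => w /= [Zw Uw]; split => // k; [move=> _|]; exact: Uw.
Qed.

Lemma prob_Z_Y z e :
  P [set w | (Z w, Y w) = (z, e)] =
  (P [set w | Z w = z] * (\prod_k ytrans phi gamma (z k) (x k) (e k))%:E)%E.
Proof.
rewrite Z_Y_eventE (indepZU z (fun k => ycoord_event phi gamma (z k) (x k) (e k)));
  last by move=> k; exact: measurable_ycoord_event.
rewrite -prodEFin; congr (mule _ _); apply: eq_bigr => k _.
by rewrite unifU ?uniform_prob_ycoord_event //; exact: measurable_ycoord_event.
Qed.

Hypothesis exchZ : exchangeable P Z.
Variable zeta : nat.
Local Notation nonesZ := [set w | nones (Z w) = zeta].

Lemma measurable_nonesZ : measurable nonesZ.
Proof. exact: (measurable_finite_preimage Z [set z | nones z = zeta]). Qed.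

Lemma setI_nonesZ z (E : set T) : E `<=` [set w | Z w = z] ->
  E `&` nonesZ = if nones z == zeta then E else set0.
Proof.
move=> EZ; case: eqP => [nones_z | nones_z]; first by apply/setIidl => w /EZ /= ->.
by apply/seteqP; split => // w [/EZ /= Zw]; rewrite Zw.
Qed.

Lemma prob_Z_nones z0 z : nones z = nones z0 ->
  P [set w | Z w = z] = (fine (P [set w | Z w = z0]))%:E.
Proof.
by move=> nones_z; rewrite fineK ?fin_num_measure //; exact: exchangeable_eq_nones.
Qed.

Lemma prob_nonesZ z0 : nones z0 = zeta ->
  P nonesZ = (fine (P [set w | Z w = z0]) *+ 'C(N, zeta))%:E.
Proof.
move=> nones_z0; have := integral_finite_valued P Z (fun=> 1) measurable_nonesZ mZ.
rewrite integral_cst ?mul1e => [->|]; last exact: measurable_nonesZ.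
rewrite -card_nones -sumr_const -sumEFin [RHS]big_mkcond /=; apply: eq_bigr => z _.
rewrite inE mul1e (setI_nonesZ z) //; case: eqP => [nones_z|_]; last exact: measure0.
by apply: prob_Z_nones; rewrite nones_z.
Qed.

Lemma integral_pgf z0 (s01 s11 : R) : nones z0 = zeta ->
  (\int[P]_(w in nonesZ) (s01 ^+ n01 x (Y w) * s11 ^+ n11 x (Y w))%:E =
   (fine (P [set w | Z w = z0]) *
    \sum_(z | nones z == zeta) \prod_k ycoord_pgf phi gamma s01 s11 (z k) (x k))%:E)%E.
Proof.
move=> nones_z0; pose G (e : {ffun 'I_N -> bool}) := s01 ^+ n01 x e * s11 ^+ n11 x e.
rewrite (integral_finite_valued P (fun w => (Z w, Y w)) (fun ze => G ze.2));
  [|exact: measurable_nonesZ | by case=> z e; exact: measurable_Z_Y_event].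
pose F z e := ((G e)%:E * P ([set w | (Z w, Y w) = (z, e)] `&` nonesZ))%E.
rewrite (eq_bigr (fun ze => F ze.1 ze.2)); last by case.
rewrite -(pair_bigA _ F) mulr_sumr -sumEFin [RHS]big_mkcond /=.
apply: eq_bigr => z _; rewrite /F.
under eq_bigr do rewrite (setI_nonesZ z) => [|w []] //.
case: eqP => [nones_z|_]; last by rewrite big1 // => e _; rewrite measure0 mule0.
have /prob_Z_nones Pz : nones z = nones z0 by rewrite nones_z nones_z0.
under eq_bigr do rewrite prob_Z_Y Pz -!EFinM.
rewrite sumEFin; congr EFin.
(* conditional independence of the coordinates: the sum over e factorizes over k *)
rewrite /ycoord_pgf bigA_distr_bigA mulr_sumr; apply: eq_bigr => e _.
by rewrite /G pgf_monomialE mulrCA -big_split.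
Qed.

Lemma integral_pgf_nonesZ (s01 s11 : R) : (0 < P nonesZ)%E ->
  (\int[P]_(w in nonesZ) (s01 ^+ n01 x (Y w) * s11 ^+ n11 x (Y w))%:E =
   ((\sum_(z | nones z == zeta) \prod_k ycoord_pgf phi gamma s01 s11 (z k) (x k))
      / ('C(N, zeta))%:R)%:E * P nonesZ)%E.
Proof.
move=> nonesZ_gt0; have [w nones_Zw] : nonesZ !=set0.
  by apply/set0P/eqP => nonesZ0; move: nonesZ_gt0; rewrite nonesZ0 measure0 ltxx.
have binN_neq0 : ('C(N, zeta))%:R != 0 :> R.
  by rewrite pnatr_eq0 -lt0n bin_gt0 -nones_Zw nones_le.
rewrite (integral_pgf (Z w)) // (prob_nonesZ (Z w)) // -EFinM -mulr_natr.
by congr EFin; field.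
Qed.

End Transition.

Theorem corollary6 (R : realType) (d : measure_display) (T : measurableType d)
  (P : probability T R) (N : nat) (phi gamma : R)
  (Z : T -> {ffun 'I_N -> bool}) (U : 'I_N -> T -> R)
  (x : {ffun 'I_N -> bool}) (s01 s11 : R) (zeta : nat) :
  (0 < N)%N ->
  0 < phi < 1 -> 0 < gamma < 1 -> 1 <= phi + gamma ->
  (forall z, measurable [set w | Z w = z]) ->
  (forall k, measurable_fun setT (U k)) ->
  exchangeable P Z ->
  (forall k (B : set R), measurable B -> P (U k @^-1` B) = uniform_prob (@ltr01 R) B) ->
  indep_Z_U P Z U ->
  (0 < P [set w | nones (Z w) = zeta])%E ->
  let Y := fun w => [ffun k => ycoord phi gamma (Z w k) (x k) (U k w)] in
  let N0 := (N - nones x)%N in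
  let N1 := nones x in
  let gf : {poly R} :=
    if phi <= gamma then
      (1 + 'X * s01%:P) ^+ N0 *
      ((1 - phi / gamma + s11 * (phi / gamma))%:P
       + 'X * ((1 - phi) / gamma + s11 * (1 - (1 - phi) / gamma))%:P) ^+ N1
    else
      (((1 - phi) / (1 - gamma) + s01 * (1 - (1 - phi) / (1 - gamma)))%:P
       + 'X * s01%:P) ^+ N0 *
      (s11%:P + 'X * ((1 - phi) / gamma + s11 * (1 - (1 - phi) / gamma))%:P) ^+ N1 in
  (\int[P]_(w in [set w | nones (Z w) = zeta])
      (s01 ^+ n01 x (Y w) * s11 ^+ n11 x (Y w))%:E =
   (gf`_zeta / ('C(N, zeta))%:R)%:E * P [set w | nones (Z w) = zeta])%E.
Proof.
move=> _ phi01 gamma01 phi_gamma mZ mU exch unifU indepZU nonesZ_gt0 Y N0 N1 gf.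
rewrite /gf /N0 /N1 -prod_ycoord_pgf.
rewrite (coef_prod_affine (fun k b => ycoord_pgf phi gamma s01 s11 b (x k))).
exact: integral_pgf_nonesZ.
Qed.
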